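(* Let $G=(V,E)$ be a graph with $n$ vertices, $m$ edges, maximum degree $\Delta$ and arboricity $\alpha$. Procedure Arboricity Edge-Coloring with parameter $h\le\log\alpha$ computes a proper $(\Delta+3\cdot2^h)$-edge-coloring of $G$ in $O\left(\frac{m\alpha^7\log n}{2^{7h}}\right)$ deterministic time. Its randomized version requires $O\left(\frac{m\alpha\log n}{2^h}\right)$ expected time.
   Context: Logarithms are base 2. The arboricity of $G$ is $\max_{S\subseteq V,|S|\ge2}\lceil |E(G[S])|/(|S|-1)\rceil$. A proper $k$-edge-coloring is a map $\varphi:E\to\{1,\dots,k\}$ with distinct colors on distinct edges sharing an endpoint. An oriented degree-splitting of $(H,\mu)$ with discrepancy $\kappa$ is a partition $(E_1,E_2)$ of $E(H)$ such that for every vertex $v$, the numbers of incoming edges of $v$ in $E_1$ and in $E_2$ differ by at most $\kappa$, and likewise for outgoing edges. Procedure Forests-Decomposition Orientation$(G)$: starting from $\mathcal A=V$, repeatedly pick $v\in\mathcal A$ of minimum degree in $G[\mathcal A]$, orient every edge from $v$ to its neighbours in $\mathcal A$, and remove $v$ from $\mathcal A$, until $\mathcal A=\emptyset$. Procedure Oriented Edge-Coloring$(H,\mu,h)$: if $h=0$, return a proper $(\Delta(H)+1)$-edge-coloring of $H$ computed by a base-case subroutine; otherwise compute in $O(|E(H)|)$ time an oriented degree-splitting $(E_1,E_2)$ of $(H,\mu)$ with discrepancy at most 1, let $H_1=(V,E_1)$, $H_2=(V,E_2)$ with orientation induced by $\mu$, compute $\varphi_1=$ Oriented Edge-Coloring$(H_1,\mu,h-1)$,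 $\varphi_2=$ Oriented Edge-Coloring$(H_2,\mu,h-1)$, and return $\varphi=\varphi_1$ on $E_1$ and $\varphi=p_1+\varphi_2$ on $E_2$, where $p_1$ is the palette size of $\varphi_1$. Procedure Arboricity Edge-Coloring$(G,h)$: compute $\mu=$ Forests-Decomposition Orientation$(G)$ and return Oriented Edge-Coloring$(G,\mu,h)$. Deterministic version: the base-case subroutine is a deterministic algorithm computing a proper $(\Delta'+1)$-edge-coloring of an $n'$-vertex $m'$-edge graph with maximum degree $\Delta'$ and arboricity $\alpha'$ in $O(m'\alpha'^7\log n')$ time. Randomized version: the base-case subroutine is a randomized algorithm computing a proper $(\Delta'+1)$-edge-coloring in expected $O(m'\alpha'\log n')$ time. *)

From mathcomp Require Import all_boot all_order all_algebra.
Set Implicit Arguments. Unset Strict Implicit. Unset Printing Implicit Defensive.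
Import Order.TTheory GRing.Theory Num.Theory.

(* A simple graph on a finite vertex type V is given by its edge set
   E : {set {set V}}, every edge being a 2-element set of vertices. *)
Section Graphs.
Variable V : finType.
Implicit Types (E H : {set {set V}}) (S A : {set V}).

Definition simple_graph E : Prop := forall e, e \in E -> #|e| = 2.

Definition deg E (v : V) : nat := #|[set e in E | v \in e]|.
Definition maxdeg E : nat := \max_(v : V) deg E v.

Definition nedges_in E S : nat := #|[set e in E | e \subset S]|.

Definition ceil_div (a b : nat) : nat := (a + b.-1) %/ b.

Definition arboricity E : nat :=
  \max_(S : {set V} | 2 <= #|S|) ceil_div (nedges_in E S) (#|S| - 1).

Definition proper_edge_coloring E (k : nat) (phi : {set V} -> nat) : Prop :=
  (forall e, e \in E -> 1 <= phi e <= k) /\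
  (forall e f, e \in E -> f \in E -> e != f -> e :&: f != set0 ->
     phi e != phi f).

(* An orientation: mu e v means v is the tail of edge e. *)
Definition orientation := {set V} -> V -> bool.

Definition outdeg (mu : orientation) E (v : V) : nat :=
  #|[set e in E | (v \in e) && mu e v]|.
Definition indeg (mu : orientation) E (v : V) : nat :=
  #|[set e in E | (v \in e) && ~~ mu e v]|.

Definition oriented_splitting (mu : orientation) H (E1 : {set {set V}})
    (kappa : nat) : Prop :=
  E1 \subset H /\
  forall v : V,
    (indeg mu E1 v <= indeg mu (H :\: E1) v + kappa) /\
    (indeg mu (H :\: E1) v <= indeg mu E1 v + kappa) /\
    (outdeg mu E1 v <= outdeg mu (H :\: E1) v + kappa) /\
    (outdeg mu (H :\: E1) v <= outdeg mu E1 v + kappa).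

(* Forests-Decomposition Orientation: a run is described by the sequence s
   of removed vertices; at step i, s_i has minimum degree in G[A] where A is
   the set of not yet removed vertices. *)
Definition fdo_run E (s : seq V) : Prop :=
  uniq s /\ size s = #|V| /\
  forall i, i < size s -> forall x0 : V,
    let A := [set x in drop i s] in
    forall u, u \in A -> deg [set e in E | e \subset A] (nth x0 s i)
                          <= deg [set e in E | e \subset A] u.

Definition fdo_orientation (s : seq V) : orientation :=
  fun e v => (v \in e) && [forall u in e, index v s <= index u s].

(* Returns the coloring and its palette size. *)
Fixpoint oriented_edge_coloring
    (split : orientation -> {set {set V}} -> {set {set V}})
    (base : {set {set V}} -> {set V} -> nat)
    (mu : orientation) (h : nat) H : ({set V} -> nat) * nat :=
  match h with
  | 0 => (base H, maxdeg H + 1)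
  | h'.+1 =>
      let E1 := split mu H in
      let E2 := H :\: E1 in
      let r1 := oriented_edge_coloring split base mu h' E1 in
      let r2 := oriented_edge_coloring split base mu h' E2 in
      (fun e => if e \in E1 then r1.1 e else r1.2 + r2.1 e, r1.2 + r2.2)
  end.

Fixpoint oriented_edge_coloring_cost (R : Type) (add : R -> R -> R)
    (split : orientation -> {set {set V}} -> {set {set V}})
    (costS : orientation -> {set {set V}} -> R)
    (costB : {set {set V}} -> R)
    (mu : orientation) (h : nat) H : R :=
  match h with
  | 0 => costB H
  | h'.+1 =>
      let E1 := split mu H in
      add (costS mu H)
        (add (oriented_edge_coloring_cost add split costS costB mu h' E1)
             (oriented_edge_coloring_cost add split costS costB mu h'
                (H :\: E1)))
  end.

Definition arboricity_edge_coloring split base (s : seq V) (h : nat) E :=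
  (oriented_edge_coloring split base (fdo_orientation s) h E).1.

End Graphs.

From mathcomp Require Import all_boot all_order all_algebra.
Import Order.TTheory GRing.Theory Num.Theory.
From mathcomp Require Import zify lra.
Set Implicit Arguments. Unset Strict Implicit. Unset Printing Implicit Defensive.

(* Forests-Decomposition Orientation gives every vertex out-degree at most
   2 alpha: a vertex is removed with minimum degree from a subgraph whose
   average degree is below 2 alpha.  Each of the h levels of the recursion
   splits the in- and the out-edges at every vertex evenly up to 1, so at each
   of the 2^h leaves H these degrees are at most (d + 2^h - 1) / 2^h of the
   original ones.  Hence Delta(H) <= (Delta + 2 * 2^h - 2) / 2^h, and the 2^h
   palettes of size Delta(H) + 1 add up to at most Delta + 3 * 2^h colors;
   and out-degrees at most 3 alpha / 2^h give alpha(H) <= 6 alpha / 2^h.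
   The splittings cost O(m) per level, O(m log n) in total, while the base
   cases cost O(sum_H |H| alpha(H)^k log n) = O(6^k m alpha^k log n / 2^(k h)),
   with k = 7 for the deterministic and k = 1 for the randomized subroutine.
*)

Lemma card_sep_sum (T : finType) (A : {set T}) (Q : pred T) :
  #|[set e in A | Q e]| = \sum_(e in A) Q e.
Proof.
rewrite -sum1_card big_mkcond [RHS]big_mkcond; apply: eq_bigr => e _.
by rewrite inE; case: (e \in A); case: (Q e).
Qed.

Lemma card_le_sum_cover (T U : finType) (A : {set T}) (S : {set U}) (P : U -> T -> bool) :
  (forall e, e \in A -> exists2 v, v \in S & P v e) ->
  #|A| <= \sum_(v in S) #|[set e in A | P v e]|.
Proof.
move=> cover; under eq_bigr => v _ do rewrite card_sep_sum.
rewrite exchange_big /= -sum1_card; apply: leq_sum => e eA.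
by have [v vS Pve] := cover e eA; rewrite (bigD1 v) //= Pve.
Qed.

Lemma card_sep_setD (T : finType) (P : pred T) (A B : {set T}) : B \subset A ->
  #|[set x in A | P x]| = #|[set x in B | P x]| + #|[set x in A :\: B | P x]|.
Proof.
move=> /subsetP BA; rewrite -(cardsID B [set x in A | P x]).
by congr (_ + _); apply: eq_card => x; rewrite !inE; have := BA x;
  case: (x \in B); case: (x \in A); case: (P x) => // ->.
Qed.

Lemma ceil_div_leP a b k : 0 < b -> (ceil_div a b <= k) = (a <= k * b).
Proof.
move=> b_gt0; rewrite /ceil_div -ltnS ltn_divLR // mulSn.
by apply/idP/idP; lia.
Qed.

Lemma ler_scale_natr (R : realFieldType) (x c : R) (a b k : nat) :
  (x <= c * a%:R)%R -> a * b <= k -> (x * b%:R <= `|c| * k%:R)%R.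
Proof.
move=> le_x le_ab; apply: le_trans (ler_wpM2r (ler0n _ b) le_x) _.
rewrite -mulrA -natrM; apply: le_trans (ler_wpM2r (ler0n _ _) (ler_norm c)) _.
by rewrite ler_wpM2l ?normr_ge0 ?ler_nat.
Qed.

Lemma leq_wexp2r m n e : m <= n -> m ^ e <= n ^ e.
Proof. by case: e => // e le_mn; rewrite leq_exp2r. Qed.

Section Graphs.
Variable V : finType.
Implicit Types (E F : {set {set V}}) (S : {set V}) (mu : orientation V).

Definition induced_edges E S := [set e in E | e \subset S].

Lemma proper_edge_coloring_le E k k' phi :
  k <= k' -> proper_edge_coloring E k phi -> proper_edge_coloring E k' phi.
Proof.
move=> le_kk' [range distinct]; split=> // e eE.
by have /andP[-> /leq_trans ->] := range e eE.
Qed.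

Lemma deg_indeg_outdeg mu E v : deg E v = indeg mu E v + outdeg mu E v.
Proof.
rewrite /deg /indeg /outdeg addnC -(cardsID [set e | mu e v] [set e in E | v \in e]).
by congr (_ + _); apply: eq_card => e; rewrite !inE;
  case: (e \in E); case: (v \in e); case: (mu e v).
Qed.

Lemma deg_le_maxdeg E v : deg E v <= maxdeg E.
Proof. exact: (@leq_bigmax V (deg E)). Qed.

Lemma maxdeg_le E k : (forall v, deg E v <= k) -> maxdeg E <= k.
Proof. by move=> le_k; apply/bigmax_leqP => v _. Qed.

Lemma sum_deg F : simple_graph F -> \sum_v deg F v = 2 * #|F|.
Proof.
move=> simpleF; under eq_bigr => v _ do rewrite /deg card_sep_sum.
rewrite exchange_big /= -sum1_card big_distrr /=; apply: eq_bigr => e eF.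
rewrite muln1 -(simpleF e eF) -sum1_card [RHS]big_mkcond /=.
by apply: eq_bigr => u _; case: (u \in e).
Qed.

Lemma nedges_in_le_arboricity E S :
  2 <= #|S| -> nedges_in E S <= arboricity E * (#|S| - 1).
Proof.
move=> S2; rewrite -ceil_div_leP; last lia.
exact: (@leq_bigmax_cond _ (fun S : {set V} => 2 <= #|S|)
  (fun S : {set V} => ceil_div (nedges_in E S) (#|S| - 1)) S S2).
Qed.

Lemma arboricity_le_outdeg mu E K :
  (forall e, e \in E -> exists2 v, v \in e & mu e v) ->
  (forall v, outdeg mu E v <= K) -> arboricity E <= 2 * K.
Proof.
move=> tail outdeg_le; apply/bigmax_leqP => S S2; rewrite ceil_div_leP; last lia.
suff : nedges_in E S <= #|S| * K by nia.
have cover e : e \in induced_edges E S -> exists2 v, v \in S & (v \in e) && mu e v.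
  rewrite inE => /andP[eE eS]; have [v ve mv] := tail e eE.
  by exists v; rewrite ?ve ?mv ?(subsetP eS v ve).
apply: leq_trans (card_le_sum_cover cover) _; rewrite -sum_nat_const.
apply: leq_sum => v _; apply: leq_trans (outdeg_le v); apply: subset_leq_card.
by apply/subsetP => e; rewrite !inE => /andP[/andP[-> _] ->].
Qed.

Lemma arboricity_le_card E : simple_graph E -> arboricity E <= #|V|.
Proof.
move=> simpleE; apply/bigmax_leqP => S S2; apply: leq_trans (max_card S).
rewrite ceil_div_leP; last lia.
have : nedges_in E S <= 'C(#|S|, 2).
  rewrite -cards_draws; apply: subset_leq_card; apply/subsetP => e.
  by rewrite !inE => /andP[eE ->]; rewrite simpleE.
rewrite bin2; lia.
Qed.

Lemma arboricity_le_edges E : arboricity E <= #|E|.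
Proof.
apply/bigmax_leqP => S S2; rewrite ceil_div_leP; last lia.
have : nedges_in E S <= #|E|.
  by apply: subset_leq_card; apply/subsetP => e; rewrite inE => /andP[].
nia.
Qed.

Lemma arboricity_gt0_card E : 0 < arboricity E -> 2 <= #|V|.
Proof.
apply: contraLR; rewrite -!leqNgt leqn0 => V_le1; rewrite -leqn0.
by apply/bigmax_leqP => S S2; have := max_card S; lia.
Qed.

Lemma min_deg_induced_le_arboricity E S v :
  simple_graph E -> v \in S ->
  (forall u, u \in S -> deg (induced_edges E S) v <= deg (induced_edges E S) u) ->
  deg (induced_edges E S) v <= 2 * arboricity E.
Proof.
move=> simpleE vS vmin; set F := induced_edges E S.
have simpleF : simple_graph F by move=> e; rewrite inE => /andP[/simpleE].
have sum_le : #|S| * deg F v <= 2 * #|F|.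
  rewrite -sum_deg // -sum_nat_const.
  apply: (@leq_trans (\sum_(u in S) deg F u)); first exact: leq_sum.
  by rewrite [X in _ <= X](bigID (mem S)) /= leq_addr.
have S_gt0 : 0 < #|S| by apply/card_gt0P; exists v.
have [S_le1 | S2] := leqP #|S| 1.
  suff -> : F = set0 by rewrite /deg (eq_card (B := pred0)) ?card0 // => e; rewrite !inE.
  apply/setP => e; rewrite !inE; apply/negP => /andP[eE /subset_leq_card].
  by rewrite simpleE //; lia.
have : #|F| <= arboricity E * (#|S| - 1) := nedges_in_le_arboricity E S2.
nia.
Qed.

Lemma fdo_orientation_tail (s : seq V) e :
  e != set0 -> exists2 v, v \in e & fdo_orientation s e v.
Proof.
case/set0Pn => v0 v0e; case: (arg_minnP (fun v => index v s) v0e) => v ve vmin.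
have {}ve : v \in e := ve.
by exists v => //; rewrite /fdo_orientation ve; apply/forall_inP.
Qed.

Lemma fdo_run_mem E (s : seq V) : fdo_run E s -> forall u, u \in s.
Proof.
move=> [uniq_s [size_s _]] u.
have card_s : #|mem s| = #|predT : pred V| by rewrite (card_uniqP uniq_s) size_s cardT.
by have /(subset_cardP card_s) -> : mem s \subset predT by apply/subsetP.
Qed.

(* The out-edges of v go to vertices removed after v, i.e. they lie in the
   subgraph in which v was removed with minimum degree. *)
Lemma fdo_outdeg_le E (s : seq V) : simple_graph E -> fdo_run E s ->
  forall v, outdeg (fdo_orientation s) E v <= 2 * arboricity E.
Proof.
move=> simpleE run v; have mem_s := fdo_run_mem run; have [_ [_ run_min]] := run.
set i := index v s; have i_lt : i < size s by rewrite index_mem.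
set A := [set x in drop i s].
have later u : i <= index u s -> u \in A.
  move=> le_iu; rewrite inE -(nth_index u (mem_s u)).
  have -> : index u s = i + (index u s - i) by lia.
  rewrite -nth_drop; apply: mem_nth; rewrite size_drop.
  by have := index_mem u s; rewrite mem_s; lia.
have vA : v \in A by apply: later.
apply: leq_trans (min_deg_induced_le_arboricity simpleE vA _); last first.
  by move=> u uA; have := run_min i i_lt v u uA; rewrite nth_index.
apply: subset_leq_card; apply/subsetP => e; rewrite !inE.
case/and3P => eE ve /andP[_ /forall_inP v_first]; rewrite eE ve andbT /=.
by apply/subsetP => u ue; apply: later; apply: v_first.
Qed.

End Graphs.

Section RecursionTree.
Variable V : finType.
Variable split : orientation V -> {set {set V}} -> {set {set V}}.
Variable mu : orientation V.
Implicit Types (H L : {set {set V}}) (h : nat).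

Fixpoint leaves h H : seq {set {set V}} :=
  if h is h'.+1 then leaves h' (split mu H) ++ leaves h' (H :\: split mu H)
  else [:: H].

Lemma size_leaves h H : size (leaves h H) = 2 ^ h.
Proof. by elim: h H => [|h IH] H //=; rewrite size_cat !IH expnS mul2n addnn. Qed.

Lemma oriented_edge_coloring_palette_leaves base h H :
  (oriented_edge_coloring split base mu h H).2 = \sum_(L <- leaves h H) (maxdeg L + 1).
Proof. by elim: h H => [|h IH] H /=; rewrite ?big_seq1 // big_cat !IH. Qed.

Lemma cost_leaves (R : nmodType) (costS : orientation V -> {set {set V}} -> R)
    (costB : {set {set V}} -> R) h H :
  oriented_edge_coloring_cost +%R split costS costB mu h H =
  (oriented_edge_coloring_cost +%R split costS (fun=> 0) mu h H +
    \sum_(L <- leaves h H) costB L)%R.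
Proof.
elim: h H => [|h IH] H /=; first by rewrite big_seq1 add0r.
by rewrite big_cat !IH -[RHS]addrA addrACA.
Qed.

Variable E : {set {set V}}.
Hypothesis split_subset : forall H, H \subset E -> split mu H \subset H.

Lemma split_parts_subset H : H \subset E ->
  [/\ split mu H \subset E, H :\: split mu H \subset E &
      #|H| = #|split mu H| + #|H :\: split mu H|].
Proof.
move=> HE; have sub := split_subset HE; split.
- exact: subset_trans sub HE.
- exact: subset_trans (subsetDl _ _) HE.
- by rewrite -(cardsID (split mu H) H) (setIidPr sub).
Qed.

Lemma leaf_subset h H L : H \subset E -> L \in leaves h H -> L \subset H.
Proof.
elim: h H => [|h IH] H HE /=; first by rewrite inE => /eqP ->.
have [sub1 sub2 _] := split_parts_subset HE.
rewrite mem_cat => /orP[/(IH _ sub1) | /(IH _ sub2)] /subset_trans; apply.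
  exact: split_subset.
exact: subsetDl.
Qed.

Lemma sum_card_leaves h H : H \subset E -> \sum_(L <- leaves h H) #|L| = #|H|.
Proof.
elim: h H => [|h IH] H HE /=; first by rewrite big_seq1.
by have [sub1 sub2 cardH] := split_parts_subset HE; rewrite big_cat /= !IH.
Qed.

(* A quantity split with discrepancy at most 1 at each of the h levels is
   divided by 2^h, up to an error below 1. *)
Lemma leaf_balanced (f : {set {set V}} -> nat) :
  (forall H, H \subset E -> [/\ f H = f (split mu H) + f (H :\: split mu H),
      f (split mu H) <= f (H :\: split mu H) + 1 &
      f (H :\: split mu H) <= f (split mu H) + 1]) ->
  forall h H L, H \subset E -> L \in leaves h H -> 2 ^ h * f L < f H + 2 ^ h.
Proof.
move=> f_split; elim=> [|h IH] H L HE /=; first by rewrite inE => /eqP ->; lia.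
have [sub1 sub2 _] := split_parts_subset HE; have [fH f1 f2] := f_split H HE.
by rewrite mem_cat expnS => /orP[/(IH _ _ sub1) | /(IH _ _ sub2)]; lia.
Qed.

Lemma oriented_edge_coloring_proper base h H :
  (forall H, H \subset E -> proper_edge_coloring H (maxdeg H + 1) (base H)) ->
  H \subset E ->
  proper_edge_coloring H (oriented_edge_coloring split base mu h H).2
     (oriented_edge_coloring split base mu h H).1.
Proof.
move=> base_proper; elim: h H => [|h IH] H HE /=; first exact: base_proper.
have [sub1 sub2 _] := split_parts_subset HE.
have [range1 distinct1] := IH _ sub1; have [range2 distinct2] := IH _ sub2.
have inD x : x \in H -> x \notin split mu H -> x \in H :\: split mu H.
  by rewrite inE => -> ->.
split=> [e eH | e f eH fH e_neq_f meet].
  by case: ifP => [/range1 | /negbT/(inD e eH)/range2]; lia.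
case: ifP => e1; case: ifP => f1.
- exact: distinct1.
- by have := range1 e e1; have := range2 f (inD f fH (negbT f1)); lia.
- by have := range1 f f1; have := range2 e (inD e eH (negbT e1)); lia.
- have := distinct2 e f (inD e eH (negbT e1)) (inD f fH (negbT f1)) e_neq_f meet.
  by apply: contra => /eqP eq_col; apply/eqP; lia.
Qed.

(* Level l of the recursion splits 2^l disjoint parts of H, at a total cost
   of at most a * (#|H| + 2^l). *)
Lemma split_cost_le (R : realFieldType) (costS : orientation V -> {set {set V}} -> R)
    (a : R) : (0 <= a)%R ->
  (forall H, H \subset E -> costS mu H <= a * (#|H|.+1)%:R)%R ->
  forall h H, H \subset E ->
  (oriented_edge_coloring_cost +%R split costS (fun=> 0%R) mu h H + a
     <= a * (h * #|H| + 2 ^ h.+1)%:R)%R.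
Proof.
move=> a_ge0 costS_le; elim=> [|h IH] H HE /=; first by rewrite mul0n add0r; lra.
have [sub1 sub2 cardH] := split_parts_subset HE.
have : (h.+1 * #|H| + 2 ^ h.+2 + 1 = #|H|.+1 + (h * #|split mu H| + 2 ^ h.+1)
   + (h * #|H :\: split mu H| + 2 ^ h.+1))%N by rewrite cardH !expnS; lia.
move/(congr1 (fun x => a * x%:R)%R); rewrite !natrD !mulrDr mulr1.
by have := IH _ sub1; have := IH _ sub2; have := costS_le _ HE; lra.
Qed.

End RecursionTree.

Section ArboricityEdgeColoring.
Variables (V : finType) (E : {set {set V}}) (s : seq V) (h : nat).
Variable split : orientation V -> {set {set V}} -> {set {set V}}.
Implicit Types (H L : {set {set V}}).
Hypothesis simpleE : simple_graph E.
Hypothesis run : fdo_run E s.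
Hypothesis splitting : forall H, H \subset E ->
  oriented_splitting (fdo_orientation s) H (split (fdo_orientation s) H) 1.
Hypothesis pow2h_le_arboricity : 2 ^ h <= arboricity E.

Local Notation mu := (fdo_orientation s).
Local Notation leaves := (leaves split mu h E).

Lemma split_subset H : H \subset E -> split mu H \subset H.
Proof. by case/splitting. Qed.

Lemma leaf_in_out_balanced L v : L \in leaves ->
  2 ^ h * indeg mu L v < indeg mu E v + 2 ^ h /\
  2 ^ h * outdeg mu L v < outdeg mu E v + 2 ^ h.
Proof.
move=> leafL; split.
- apply: (leaf_balanced split_subset (f := fun X => indeg mu X v) _ (subxx E) leafL).
  move=> H HE; have [_ /(_ v)[in1 [in2 _]]] := splitting HE.
  by split=> //; apply: card_sep_setD (split_subset HE).
- apply: (leaf_balanced split_subset (f := fun X => outdeg mu X v) _ (subxx E) leafL).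
  move=> H HE; have [_ /(_ v)[_ [_ [out1 out2]]]] := splitting HE.
  by split=> //; apply: card_sep_setD (split_subset HE).
Qed.

Lemma leaf_maxdeg L : L \in leaves ->
  maxdeg L <= (maxdeg E + 2 * 2 ^ h - 2) %/ 2 ^ h.
Proof.
move=> leafL; apply: maxdeg_le => v; rewrite leq_divRL ?expn_gt0 //.
have [le_in le_out] := leaf_in_out_balanced v leafL.
have := deg_le_maxdeg E v; rewrite !(deg_indeg_outdeg mu); lia.
Qed.

Lemma oriented_edge_coloring_palette_le base :
  (oriented_edge_coloring split base mu h E).2 <= maxdeg E + 3 * 2 ^ h.
Proof.
rewrite oriented_edge_coloring_palette_leaves.
set q := (maxdeg E + 2 * 2 ^ h - 2) %/ 2 ^ h.
apply: (@leq_trans (\sum_(L <- leaves) (q + 1))).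
  rewrite [X in X <= _]big_seq [X in _ <= X]big_seq.
  by apply: leq_sum => L /leaf_maxdeg; rewrite leq_add2r.
rewrite big_const_seq count_predT iter_addn_0 size_leaves.
have := leq_divM (maxdeg E + 2 * 2 ^ h - 2) (2 ^ h); rewrite -/q; lia.
Qed.

Lemma arboricity_edge_coloring_proper base :
  (forall H, H \subset E -> proper_edge_coloring H (maxdeg H + 1) (base H)) ->
  proper_edge_coloring E (maxdeg E + 3 * 2 ^ h) (arboricity_edge_coloring split base s h E).
Proof.
move=> base_proper; apply: proper_edge_coloring_le (oriented_edge_coloring_palette_le base) _.
exact: (oriented_edge_coloring_proper split_subset h base_proper (subxx E)).
Qed.

(* The splitting divides the out-degrees, at most 2 * arboricity E after
   the Forests-Decomposition Orientation, by 2^h. *)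
Lemma leaf_arboricity L : L \in leaves -> arboricity L * 2 ^ h <= 6 * arboricity E.
Proof.
move=> leafL; set K := 3 * arboricity E %/ 2 ^ h.
have outdeg_le v : outdeg mu L v <= K.
  rewrite leq_divRL ?expn_gt0 //; have [_ le_out] := leaf_in_out_balanced v leafL.
  by have := fdo_outdeg_le simpleE run v; lia.
have tail e : e \in L -> exists2 v, v \in e & mu e v.
  move=> eL; apply: fdo_orientation_tail; apply/set0Pn.
  have /card_gt0P[v ve] : 0 < #|e|.
    by rewrite simpleE // (subsetP (leaf_subset split_subset (subxx E) leafL)).
  by exists v.
have := leq_mul (arboricity_le_outdeg tail outdeg_le) (leqnn (2 ^ h)).
by have := leq_divM (3 * arboricity E) (2 ^ h); rewrite -/K; lia.
Qed.

Lemma trunc_log_card_gt0 : 0 < trunc_log 2 #|V|.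
Proof.
rewrite trunc_log_gt0 /=; apply: (arboricity_gt0_card (E := E)).
by apply: leq_trans pow2h_le_arboricity; rewrite expn_gt0.
Qed.

Lemma leq_h_trunc_log : h <= trunc_log 2 #|V|.
Proof.
apply: trunc_log_max => //; apply: leq_trans pow2h_le_arboricity _.
exact: arboricity_le_card.
Qed.

Lemma pow2h_le_edges : 2 ^ h <= #|E|.
Proof. exact: leq_trans pow2h_le_arboricity (arboricity_le_edges E). Qed.

Local Notation lg := (trunc_log 2 #|V|).
Local Notation volume k := (#|E| * arboricity E ^ k * lg).

Lemma leaves_base_size_le k :
  (\sum_(L <- leaves) (#|L| * arboricity L ^ k * lg).+1) * (2 ^ h) ^ k
    <= (6 ^ k).+1 * volume k.
Proof.
have pow_le := leq_wexp2r k pow2h_le_arboricity.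
have leaf_le L : L \in leaves ->
    (#|L| * arboricity L ^ k * lg).+1 * (2 ^ h) ^ k
      <= 6 ^ k * arboricity E ^ k * lg * #|L| + (2 ^ h) ^ k.
  move=> /leaf_arboricity /(leq_wexp2r k); rewrite !expnMn => arb_le.
  by have := leq_mul (leq_mul (leqnn #|L|) arb_le) (leqnn lg); nia.
rewrite big_distrl /=; apply: (leq_trans (n := \sum_(L <- leaves)
  (6 ^ k * arboricity E ^ k * lg * #|L| + (2 ^ h) ^ k))).
  by rewrite [X in X <= _]big_seq [X in _ <= X]big_seq; apply: leq_sum.
rewrite big_split /= -big_distrr /= (sum_card_leaves split_subset h (subxx E)).
rewrite big_const_seq count_predT iter_addn_0 size_leaves.
have lg_gt0 : 0 < lg := trunc_log_card_gt0.
have := leq_mul (leq_mul pow2h_le_edges pow_le) lg_gt0.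
(* generalizing identifies the convertible but distinct copies of #|E| and lg *)
move: (2 ^ h) ((2 ^ h) ^ k) (6 ^ k) (arboricity E ^ k) lg #|E| => ? ? ? ? ? ?; nia.
Qed.

Local Open Scope ring_scope.

Variables (R : realFieldType) (cO cS costO : R).
Variable costS : orientation V -> {set {set V}} -> R.
Hypothesis costO_le : costO <= cO * (#|E|.+1)%:R.
Hypothesis costS_le : forall H, H \subset E -> costS mu H <= cS * (#|H|.+1)%:R.

Lemma orientation_cost_scaled k :
  costO * ((2 ^ h) ^ k)%:R <= `|cO| * 2%:R * (volume k)%:R.
Proof.
rewrite -mulrA -natrM; apply: ler_scale_natr costO_le _.
have lg_gt0 : (0 < lg)%N := trunc_log_card_gt0.
have edges_gt0 : (0 < #|E|)%N by apply: leq_trans pow2h_le_edges; rewrite expn_gt0.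
have := leq_mul (leq_mul (leqnn #|E|) (leq_wexp2r k pow2h_le_arboricity)) lg_gt0.
move: edges_gt0; move: ((2 ^ h) ^ k)%N (arboricity E ^ k)%N lg #|E| => ? ? ? ?; nia.
Qed.

Lemma split_cost_scaled k :
  oriented_edge_coloring_cost +%R split costS (fun=> 0) mu h E * ((2 ^ h) ^ k)%:R
    <= `|cS| * 3%:R * (volume k)%:R.
Proof.
have costS_norm H : H \subset E -> costS mu H <= `|cS| * (#|H|.+1)%:R.
  by move=> HE; apply: le_trans (costS_le HE) _; rewrite ler_wpM2r ?ler_norm.
have := split_cost_le split_subset (normr_ge0 cS) costS_norm h (subxx E).
rewrite -mulrA -natrM -[in X in _ -> X](normr_id cS) => le_cost.
apply: ler_scale_natr; first by apply: le_trans le_cost; rewrite lerDl.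
have lg_gt0 : (0 < lg)%N := trunc_log_card_gt0.
have := leq_mul (leq_mul pow2h_le_edges (leq_wexp2r k pow2h_le_arboricity)) lg_gt0.
have := leq_mul (leq_mul (leqnn #|E|) (leq_wexp2r k pow2h_le_arboricity)) leq_h_trunc_log.
rewrite expnS.
move: (2 ^ h)%N ((2 ^ h) ^ k)%N (arboricity E ^ k)%N lg #|E| => ? ? ? ? ?; nia.
Qed.

Lemma base_cost_scaled k (c : R) (costB : {set {set V}} -> R) :
  (forall H, H \subset E -> costB H <= c * (#|H| * arboricity H ^ k * lg).+1%:R) ->
  (\sum_(L <- leaves) costB L) * ((2 ^ h) ^ k)%:R
    <= `|c| * (6 ^ k).+1%:R * (volume k)%:R.
Proof.
move=> costB_le; rewrite -mulrA -natrM; apply: ler_scale_natr (leaves_base_size_le k).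
rewrite natr_sum mulr_sumr [X in X <= _]big_seq [X in _ <= X]big_seq.
by apply: ler_sum => L /(leaf_subset split_subset (subxx E)) /costB_le.
Qed.

Lemma arboricity_edge_coloring_cost k (c C : R) (costB : {set {set V}} -> R) :
  (forall H, H \subset E -> costB H <= c * (#|H| * arboricity H ^ k * lg).+1%:R) ->
  `|cO| * 2%:R + `|cS| * 3%:R + `|c| * (6 ^ k).+1%:R <= C ->
  costO + oriented_edge_coloring_cost +%R split costS costB mu h E
    <= C * (volume k)%:R / ((2 ^ h) ^ k)%:R.
Proof.
move=> costB_le le_C; rewrite ler_pdivlMr ?ltr0n ?expn_gt0 // cost_leaves.
apply: le_trans (ler_wpM2r (ler0n _ _) le_C); rewrite !mulrDl.
have := orientation_cost_scaled k; have := split_cost_scaled k.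
have := base_cost_scaled costB_le; lra.
Qed.

End ArboricityEdgeColoring.

Local Open Scope ring_scope.

Theorem theorem4p15 (R : realFieldType) (cO cS cB cR : R) :
  exists C : R,
  forall (V : finType) (E : {set {set V}}) (h : nat) (s : seq V)
         (split : orientation V -> {set {set V}} -> {set {set V}})
         (base : {set {set V}} -> {set V} -> nat)
         (costO : R)
         (costS : orientation V -> {set {set V}} -> R)
         (costB ecostB : {set {set V}} -> R),
    let n := #|V| in
    let m := #|E| in
    let Delta := maxdeg E in
    let alpha := arboricity E in
    let lg := trunc_log 2 n in
    let mu := fdo_orientation s in
    simple_graph E ->
    (2 ^ h <= alpha)%N ->
    fdo_run E s ->
    (* degree-splitting subroutine: discrepancy <= 1, time O(|E(H)|) *)
    (forall H : {set {set V}}, H \subset E -> oriented_splitting mu H (split mu H) 1) ->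
    (forall H : {set {set V}}, H \subset E -> costS mu H <= cS * (#|H|.+1)%N%:R) ->
    (* base case: proper (Delta(H)+1)-edge-coloring *)
    (forall H : {set {set V}}, H \subset E -> proper_edge_coloring H (maxdeg H + 1) (base H)) ->
    (* Forests-Decomposition Orientation time O(m) *)
    costO <= cO * (m.+1)%N%:R ->
    (* deterministic base case time O(m' alpha'^7 log n') *)
    (forall H : {set {set V}}, H \subset E ->
       costB H <= cB * (#|H| * arboricity H ^ 7 * lg).+1%N%:R) ->
    (* randomized base case expected time O(m' alpha' log n') *)
    (forall H : {set {set V}}, H \subset E ->
       ecostB H <= cR * (#|H| * arboricity H * lg).+1%N%:R) ->
    proper_edge_coloring E (Delta + 3 * 2 ^ h)%N
      (arboricity_edge_coloring split base s h E) /\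
    costO + oriented_edge_coloring_cost +%R split costS costB mu h E
      <= C * (m * alpha ^ 7 * lg)%N%:R / (2 ^ (7 * h))%N%:R /\
    costO + oriented_edge_coloring_cost +%R split costS ecostB mu h E
      <= C * (m * alpha * lg)%N%:R / (2 ^ h)%N%:R.
Proof.
exists (`|cO| * 2%:R + `|cS| * 3%:R + `|cB| * (6 ^ 7).+1%:R + `|cR| * (6 ^ 1).+1%:R).
move=> V E h s split base costO costS costB ecostB /=.
move=> simpleE pow2h_le run splitting costS_le base_proper costO_le costB_le ecostB_le.
have cost := arboricity_edge_coloring_cost simpleE run splitting pow2h_le costO_le costS_le.
split; last split.
- exact: arboricity_edge_coloring_proper.
- rewrite [(7 * h)%N]mulnC expnM; apply: cost costB_le _.
  by have := normr_ge0 cR; lra.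
- have ecostB_le1 (H : {set {set V}}) : H \subset E ->
      ecostB H <= cR * (#|H| * arboricity H ^ 1 * trunc_log 2 #|V|).+1%N%:R.
    by rewrite expn1; apply: ecostB_le.
  have := cost 1%N _ _ _ ecostB_le1; rewrite !expn1; apply.
  by have := normr_ge0 cB; lra.
Qed.
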